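(* Let \(P\colon\mathbb{R}^n\to\mathbb{R}^n\) be a vector field, let \(\nu,\eta\colon\mathbb{R}_+\to\mathbb{R}\) be continuous functions and \(\varepsilon\in\mathbb{R}\) a constant, and consider the second order differential equation \[\ddot x+\nu(t)\dot x+\eta(t)P(x)=\varepsilon\,\frac{d}{dt}\big[\eta(t)P(x)\big].\] If \(P\) is conservative, \(P=\nabla f\) for some function \(f\colon\mathbb{R}^n\to\mathbb{R}\), then this equation is derived from the Lagrange–d'Alembert variational principle: it is the equation of motion (forced Euler–Lagrange equation \(\frac{d}{dt}\big(\frac{\partial L}{\partial \dot x^i}\big)-\frac{\partial L}{\partial x^i}=F_i\)) of the forced time-dependent Lagrangian system with \[L(x,\dot x,t)=a(t)\tfrac12\|\dot x\|^2-b(t)f(x),\qquad F(x,\dot x,t)=\varepsilon\,a(t)\frac{d}{dt}\Big[\frac{b(t)}{a(t)}P(x)\Big],\] where \(a(t)=\exp\big(\int_0^t\nu(s)\,ds\big)\) and \(b(t)=a(t)\eta(t)\) for \(t\ge0\).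
   Context: The Lagrange–d'Alembert principle for a time-dependent Lagrangian \(L\colon TQ\times\mathbb{R}\to\mathbb{R}\) and external force \(F\) seeks curves \(\sigma\) with fixed endpoints such that \(\delta\int_a^b L(\sigma'(t),t)\,dt+\int_a^b F(\sigma'(t),t)\,\delta\sigma(t)\,dt=0\) for all variations \(\delta\sigma\) vanishing at the endpoints; its solutions satisfy the forced Euler–Lagrange equations \(\frac{d}{dt}\big(\frac{\partial L}{\partial \dot x^i}\big)-\frac{\partial L}{\partial x^i}=F_i\). *)

From Stdlib Require Import Reals.
From Coquelicot Require Import Coquelicot.
From mathcomp Require Import ssreflect ssrbool ssrfun eqtype ssrnat fintype bigop.

Set Implicit Arguments.
Unset Strict Implicit.

Open Scope R_scope.

Definition vec (n : nat) := 'I_n -> R.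

Definition upd {n : nat} (v : vec n) (i : 'I_n) (h : R) : vec n :=
  fun j => if j == i then h else v j.

Definition partial {n : nat} (g : vec n -> R) (v : vec n) (i : 'I_n) : R :=
  Derive (fun h => g (upd v i h)) (v i).

Definition is_gradient {n : nat} (f : vec n -> R) (P : vec n -> vec n) : Prop :=
  forall (v : vec n) (i : 'I_n), is_derive (fun h => f (upd v i h)) (v i) (P v i).

Definition sqnorm {n : nat} (v : vec n) : R :=
  \big[Rplus/0]_(i < n) (v i * v i).

Definition continuous_on_Rplus (g : R -> R) : Prop :=
  forall t, 0 <= t -> filterlim g (within (fun s => 0 <= s) (locally t)) (locally (g t)).

Definition coef_a (nu : R -> R) (t : R) : R := exp (RInt nu 0 t).
Definition coef_b (nu eta : R -> R) (t : R) : R := coef_a nu t * eta t.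

Definition Lag {n : nat} (nu eta : R -> R) (f : vec n -> R)
  (x v : vec n) (t : R) : R :=
  coef_a nu t * (1 / 2) * sqnorm v - coef_b nu eta t * f x.

Definition vel {n : nat} (x : R -> vec n) (t : R) : vec n :=
  fun i => Derive (fun s => x s i) t.

Definition force {n : nat} (nu eta : R -> R) (eps : R) (P : vec n -> vec n)
  (x : R -> vec n) (t : R) (i : 'I_n) : R :=
  eps * coef_a nu t * Derive (fun s => coef_b nu eta s / coef_a nu s * P (x s) i) t.

Definition forced_EL_at {n : nat} (nu eta : R -> R) (eps : R) (f : vec n -> R)
  (P : vec n -> vec n) (x : R -> vec n) (t : R) : Prop :=
  forall i : 'I_n,
    is_derive (fun s => partial (fun v => Lag nu eta f (x s) v s) (vel x s) i) t
      (partial (fun y => Lag nu eta f y (vel x t) t) (x t) i + force nu eta eps P x t i).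

Definition ode_at {n : nat} (nu eta : R -> R) (eps : R) (P : vec n -> vec n)
  (x : R -> vec n) (t : R) : Prop :=
  forall i : 'I_n,
    Derive (fun s => vel x s i) t + nu t * vel x t i + eta t * P (x t) i
    = eps * Derive (fun s => eta s * P (x s) i) t.

(* Along a curve, dL/dxdot = a xdot and dL/dx = -b P(x) = -a eta P(x), while the
   force is eps a d/dt[eta P(x)] because b/a = eta.  Since a' = nu a by the
   fundamental theorem of calculus, the forced Euler-Lagrange equation is a(t)
   times the ODE, and a(t) = exp(...) > 0. *)
From Stdlib Require Import Reals Lra.
From Coquelicot Require Import Coquelicot.
From mathcomp Require Import ssreflect ssrbool ssrfun eqtype ssrnat fintype bigop.
From HB Require Import structures.
Open Scope R_scope.

HB.instance Definition _ :=
  Monoid.isComLaw.Build R 0 Rplus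
    (fun a b c => esym (Rplus_assoc a b c)) Rplus_comm Rplus_0_l.

Lemma is_derive_iff {f : R -> R} {x l0 : R} (l : R) :
  is_derive f x l0 -> (is_derive f x l <-> l = l0).
Proof.
move=> Hl0; split=> [Hl | ->]; last exact: Hl0.
by rewrite -(is_derive_unique _ _ _ Hl) (is_derive_unique _ _ _ Hl0).
Qed.

Lemma continuous_Rmax0 (s : R) : continuous (Rmax 0) s.
Proof.
apply: (continuous_ext (fun r => (r + Rabs r) / 2)).
  move=> r; rewrite /Rmax /Rabs; case: Rle_dec; case: Rcase_abs; lra.
apply: continuous_mult; last exact: continuous_const.
exact: continuous_plus (continuous_id _) (continuous_Rabs _).
Qed.

Lemma continuous_on_Rplus_comp_Rmax0 (g : R -> R) (s : R) :
  continuous_on_Rplus g -> continuous (fun r => g (Rmax 0 r)) s.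
Proof.
move=> Hg.
apply: (filterlim_comp _ _ _ (Rmax 0) g _
          (within (fun r => 0 <= r) (locally (Rmax 0 s)))).
  move=> Q HQ.
  have near_s : locally s (fun r => 0 <= Rmax 0 r -> Q (Rmax 0 r)).
    exact: continuous_Rmax0 s _ HQ.
  by apply: filter_imp near_s => r; apply; apply: Rmax_l.
by apply: Hg; apply: Rmax_l.
Qed.

(* g is only continuous on [0, +oo), so we integrate its continuous extension
   g (max 0 .), which agrees with g on [0, t]. *)
Lemma is_derive_RInt_0 (g : R -> R) (t : R) :
  continuous_on_Rplus g -> 0 < t -> is_derive (RInt g 0) t (g t).
Proof.
move=> Hg Ht; set ge := fun r => g (Rmax 0 r).
have ge_cont : forall r, continuous ge r.
  by move=> r; exact: continuous_on_Rplus_comp_Rmax0.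
have near_t : locally t (fun b => RInt ge 0 b = RInt g 0 b).
  exists (mkposreal t Ht) => b /= Hb; apply: RInt_ext => r.
  have Hb0 : 0 < b.
    move: Hb; rewrite /ball /= /AbsRing_ball /abs /minus /plus /opp /=.
    by move=> /Rabs_def2; lra.
  rewrite Rmin_left ?Rmax_right; try lra.
  by move=> Hr; rewrite /ge Rmax_right //; lra.
apply: (is_derive_ext_loc _ _ _ _ near_t).
have -> : g t = ge t by rewrite /ge Rmax_right //; lra.
apply: is_derive_RInt; last exact: ge_cont.
apply: filter_forall => b; apply: RInt_correct.
by apply: ex_RInt_continuous => r _; exact: ge_cont.
Qed.

Lemma coef_a_gt0 (nu : R -> R) (t : R) : 0 < coef_a nu t.
Proof. exact: exp_pos. Qed.

Lemma is_derive_coef_a (nu : R -> R) (t : R) :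
  continuous_on_Rplus nu -> 0 < t -> is_derive (coef_a nu) t (nu t * coef_a nu t).
Proof.
move=> Hnu Ht.
exact: is_derive_comp exp _ _ _ _ (is_derive_exp _) (is_derive_RInt_0 _ _ Hnu Ht).
Qed.

Lemma is_derive_sqnorm_upd (n : nat) (v : vec n) (i : 'I_n) (h0 : R) :
  is_derive (fun h => sqnorm (upd v i h)) h0 (2 * h0).
Proof.
set rest := \big[Rplus/0]_(j < n | j != i) (v j * v j).
apply: (is_derive_ext (fun h => h * h + rest)).
  move=> h; rewrite /sqnorm (bigD1 i) //= /upd eqxx; congr (_ + _).
  by apply: eq_bigr => j /negbTE ->.
by auto_derive; [|ring].
Qed.

Lemma partial_Lag_vel (n : nat) (nu eta : R -> R) (f : vec n -> R)
    (y v : vec n) (s : R) (i : 'I_n) :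
  partial (fun w => Lag nu eta f y w s) v i = coef_a nu s * v i.
Proof.
apply: is_derive_unique.
have -> : coef_a nu s * v i = minus (coef_a nu s * (1 / 2) * (2 * v i)) 0.
  by rewrite /minus /plus /opp /=; field.
apply: is_derive_minus (is_derive_const _ _).
exact: is_derive_scal (is_derive_sqnorm_upd _ v i (v i)).
Qed.

Lemma partial_Lag_pos {n : nat} {nu eta : R -> R} {f : vec n -> R}
    {P : vec n -> vec n} {y v : vec n} {s : R} {i : 'I_n} :
  is_gradient f P ->
  partial (fun z => Lag nu eta f z v s) y i = - (coef_b nu eta s * P y i).
Proof.
move=> grad_f; apply: is_derive_unique.
have -> : - (coef_b nu eta s * P y i) = minus 0 (coef_b nu eta s * P y i).
  by rewrite /minus /plus /opp /=; ring.
apply: is_derive_minus (is_derive_const _ _) _.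
exact: is_derive_scal (grad_f y i).
Qed.

Lemma is_derive_momentum {n : nat} {nu : R -> R} (eta : R -> R) (f : vec n -> R)
    {x : R -> vec n} {i : 'I_n} {t acc : R} :
  continuous_on_Rplus nu -> 0 < t -> is_derive (fun s => vel x s i) t acc ->
  is_derive (fun s => partial (fun v => Lag nu eta f (x s) v s) (vel x s) i) t
    (coef_a nu t * (nu t * vel x t i + acc)).
Proof.
move=> Hnu Ht Hacc.
apply: (is_derive_ext (fun s => coef_a nu s * vel x s i)).
  by move=> s; rewrite partial_Lag_vel.
have -> : coef_a nu t * (nu t * vel x t i + acc)
          = plus (mult (nu t * coef_a nu t) (vel x t i)) (mult (coef_a nu t) acc).
  by rewrite /plus /mult /=; ring.
exact: is_derive_mult (is_derive_coef_a _ _ Hnu Ht) Hacc Rmult_comm.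
Qed.

Lemma forceE (n : nat) (nu eta : R -> R) (eps : R) (P : vec n -> vec n)
    (x : R -> vec n) (t : R) (i : 'I_n) :
  force nu eta eps P x t i = eps * coef_a nu t * Derive (fun s => eta s * P (x s) i) t.
Proof.
congr (_ * _); apply: Derive_ext => s.
by rewrite /coef_b; field; apply: Rgt_not_eq; apply: coef_a_gt0.
Qed.

Theorem lemma7p1 (n : nat) (P : vec n -> vec n) (f : vec n -> R)
  (nu eta : R -> R) (eps : R) :
  continuous_on_Rplus nu -> continuous_on_Rplus eta ->
  is_gradient f P ->
  forall x : R -> vec n,
    (forall (s : R) (i : 'I_n), 0 < s ->
       ex_derive (fun r => x r i) s /\ ex_derive (fun r => vel x r i) s) ->
    forall t : R, 0 < t ->
      (forced_EL_at nu eta eps f P x t <-> ode_at nu eta eps P x t).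
Proof.
move=> Hnu _ grad_f x Hx t Ht.
suff EL_iff_ode : forall i : 'I_n,
    is_derive (fun s => partial (fun v => Lag nu eta f (x s) v s) (vel x s) i) t
      (partial (fun y => Lag nu eta f y (vel x t) t) (x t) i + force nu eta eps P x t i)
    <-> Derive (fun s => vel x s i) t + nu t * vel x t i + eta t * P (x t) i
        = eps * Derive (fun s => eta s * P (x s) i) t.
  by split=> H i; apply/EL_iff_ode.
move=> i.
have Hacc := Derive_correct _ _ (proj2 (Hx t i Ht)).
rewrite (is_derive_iff _ (is_derive_momentum eta f Hnu Ht Hacc)).
rewrite (partial_Lag_pos grad_f) forceE /coef_b.
have a_pos := coef_a_gt0 nu t.
(* Each Derive occurs in two elaborations; [set] merges them into one atom for lra. *)
set acc := Derive (fun s => vel x s i) t.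
set deta := Derive (fun s => eta s * P (x s) i) t.
split=> E.
- apply: (Rmult_eq_reg_l (coef_a nu t)); [lra | exact: Rgt_not_eq].
- have := f_equal (Rmult (coef_a nu t)) E; lra.
Qed.
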